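(* Let $k$ be a commutative ring, $A$ a commutative $k$-algebra, and $(A,\mathfrak g_{A/k},\alpha)$ a Lie algebroid. Let $S^\cdot=\bigoplus_{i\ge 0}S^i$ be a graded $\mathfrak g_{A/k}$-algebra which is noetherian, and let $M^\cdot$ be a graded $(S^\cdot,\mathfrak g_{A/k})$-module which is of finite type over $S^\cdot$. Denote by $\bar S^\cdot=(S^\cdot)^{\mathfrak g_{A/k}}$ and $\bar M^\cdot=(M^\cdot)^{\mathfrak g_{A/k}}$ the invariants. (1) Assume that $S^\cdot$ is semi-simple as a $\mathfrak g_{A/k}$-module and that $\bar S^0$ is a noetherian ring. Then $\bar S^\cdot$ is a graded noetherian subring of $S^\cdot$. (2) Assume the hypotheses of (1) and in addition that $M^\cdot$ is semi-simple as a $\mathfrak g_{A/k}$-module. Then $\bar M^\cdot$ is of finite type over $\bar S^\cdot$.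
   Context: $T_{A/k}$ denotes the $A$-module (and $k$-Lie algebra) of $k$-linear derivations of $A$. A Lie algebroid $(A,\mathfrak g_{A/k},\alpha)$ consists of an $A$-module of finite type $\mathfrak g_{A/k}$ with a $k$-bilinear Lie bracket $[\cdot,\cdot]$ and a map $\alpha:\mathfrak g_{A/k}\to T_{A/k}$ which is a homomorphism of Lie algebras and of $A$-modules, such that $[\delta,a\eta]=\alpha(\delta)(a)\eta+a[\delta,\eta]$ for $a\in A$, $\delta,\eta\in\mathfrak g_{A/k}$. A $\mathfrak g_{A/k}$-module is an $A$-module $M$ with a $k$-Lie algebra homomorphism $f:\mathfrak g_{A/k}\to \mathrm{End}_k(M)$ such that $f(a\delta)(m)=af(\delta)(m)$ and $f(\delta)(am)=\alpha(\delta)(a)m+af(\delta)(m)$. A $\mathfrak g_{A/k}$-module is semi-simple if it is a direct sum of simple $\mathfrak g_{A/k}$-modules (equivalently every $\mathfrak g_{A/k}$-submodule is a direct summand). A graded $\mathfrak g_{A/k}$-algebra is a graded commutative $A$-algebra $S^\cdot=\bigoplus_{i\ge0}S^i$ which is a $\mathfrak g_{A/k}$-module via a homomorphism of $A$-modules and Lie algebras $\phi:\mathfrak g_{A/k}\to T_{S^\cdot/k}$ with $\phi(\delta)(S^i)\subset S^i$ for all $\delta,i$. A graded $(S^\cdot,\mathfrak g_{A/k})$-module is a graded $S^\cdot$-module $M^\cdot=\bigoplus_{i\in\mathbb Z}M^i$ which is also a $\mathfrak g_{A/k}$-module with $\delta M^i\subset M^i$ and $\delta(sm)=\delta(s)m+s\,\delta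 m$ for $s\in S^\cdot$, $m\in M^\cdot$, $\delta\in\mathfrak g_{A/k}$. For such a module, $\bar M^\cdot=\{m\in M^\cdot:\delta m=0\ \forall\delta\in\mathfrak g_{A/k}\}$; it is a graded $\bar S^\cdot$-module and $\bar S^\cdot=\bigoplus_i\bar S^i$ is a graded subring of $S^\cdot$. *)

From HB Require Import structures.
From mathcomp Require Import all_boot all_order all_algebra.
Set Implicit Arguments. Unset Strict Implicit. Unset Printing Implicit Defensive.
Import GRing.Theory.
Local Open Scope ring_scope.

Definition fin_gen (R : Type) (V : zmodType) (sc : R -> V -> V)
    (P : R -> Prop) (N : V -> Prop) : Prop :=
  exists gens : seq V,
    (forall i : 'I_(size gens), N gens`_i) /\
    forall v, N v -> exists c : 'I_(size gens) -> R,
      (forall i, P (c i)) /\ v = \sum_(i < size gens) sc (c i) gens`_i.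

Definition subring_pred (R : pzRingType) (P : R -> Prop) : Prop :=
  P 1 /\ forall x y, P x -> P y -> P (x - y) /\ P (x * y).

Definition ideal_of (R : pzRingType) (P J : R -> Prop) : Prop :=
  [/\ forall x, J x -> P x, J 0,
      forall x y, J x -> J y -> J (x + y) &
      forall r x, P r -> J x -> J (r * x)].

(* The (commutative) ring with carrier [P] is noetherian: every ideal
   is finitely generated.  [noetherian_sub (fun _ => True)] says that the
   ring [R] itself is noetherian. *)
Definition noetherian_sub (R : comPzRingType) (P : R -> Prop) : Prop :=
  forall J : R -> Prop, ideal_of P J -> fin_gen *%R P J.

Definition direct_sum (I : eqType) (V : zmodType) (G : I -> V -> Prop) : Prop :=
  (forall v, exists (s : seq I) (c : I -> V),
     [/\ uniq s, forall i, G i (c i) & v = \sum_(i <- s) c i]) /\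
  (forall (s : seq I) (c : I -> V), uniq s -> (forall i, i \in s -> G i (c i)) ->
     \sum_(i <- s) c i = 0 -> forall i, i \in s -> c i = 0).

Definition graded_sub (I : eqType) (V : zmodType) (G : I -> V -> Prop)
    (P : V -> Prop) : Prop :=
  forall v, P v -> exists (s : seq I) (c : I -> V),
     [/\ uniq s, forall i, P (c i) /\ G i (c i) & v = \sum_(i <- s) c i].

Definition kderivation (K : Type) (R : pzRingType) (ks : K -> R -> R)
    (D : R -> R) : Prop :=
  [/\ forall x y, D (x + y) = D x + D y,
      forall c x, D (ks c x) = ks c (D x) &
      forall x y, D (x * y) = D x * y + x * D y].

Section LieAlgebroid.
Variables (k : comPzRingType) (A : comAlgType k).

Definition lie_algebroid (g : lmodType A) (br : g -> g -> g)
    (alpha : g -> A -> A) : Prop :=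
  fin_gen *:%R (fun _ : A => True) (fun _ : g => True) /\
  [/\
      [/\ forall x y z, br (x + y) z = br x z + br y z,
          forall x y z, br x (y + z) = br x y + br x z,
          forall (c : k) x y, br ((c%:A : A) *: x) y = (c%:A : A) *: br x y,
          forall (c : k) x y, br x ((c%:A : A) *: y) = (c%:A : A) *: br x y &
          ((forall x, br x x = 0) /\
           (forall x y z, br x (br y z) + br y (br z x) + br z (br x y) = 0))],
      forall d, kderivation (fun (c : k) (a : A) => c *: a) (alpha d),
      ((forall d e a, alpha (d + e) a = alpha d a + alpha e a) /\
       (forall (b : A) d a, alpha (b *: d) a = b * alpha d a)),
      (forall d e a, alpha (br d e) a = alpha d (alpha e a) - alpha e (alpha d a)) &
      (forall d e (b : A), br d (b *: e) = alpha d b *: e + b *: br d e)].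

Variables (g : lmodType A) (br : g -> g -> g) (alpha : g -> A -> A).

Definition gmodule (M : zmodType) (sc : A -> M -> M) (f : g -> M -> M) : Prop :=
  [/\ (forall d m m', f d (m + m') = f d m + f d m') /\
        (forall d (c : k) m, f d (sc c%:A m) = sc c%:A (f d m)),
      forall d e m, f (d + e) m = f d m + f e m,
      forall (a : A) d m, f (a *: d) m = sc a (f d m),
      forall d e m, f (br d e) m = f d (f e m) - f e (f d m) &
      forall d (a : A) m, f d (sc a m) = sc (alpha d a) m + sc a (f d m)].

Definition gsubmodule (M : zmodType) (sc : A -> M -> M) (f : g -> M -> M)
    (N : M -> Prop) : Prop :=
  [/\ N 0, forall x y, N x -> N y -> N (x + y),
      forall a x, N x -> N (sc a x) & forall d x, N x -> N (f d x)].

Definition simple_gsubmodule (M : zmodType) (sc : A -> M -> M)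
    (f : g -> M -> M) (N : M -> Prop) : Prop :=
  [/\ gsubmodule sc f N, exists x, N x /\ x <> 0 &
      forall N' : M -> Prop, gsubmodule sc f N' -> (forall x, N' x -> N x) ->
        (forall x, N' x -> x = 0) \/ (forall x, N x -> N' x)].

Definition semisimple_gmodule (M : zmodType) (sc : A -> M -> M)
    (f : g -> M -> M) : Prop :=
  exists (I : eqType) (N : I -> M -> Prop),
    (forall i, simple_gsubmodule sc f (N i)) /\ direct_sum N.

Definition invariants (M : Type) (z : M) (f : g -> M -> M) : M -> Prop :=
  fun m => forall d, f d m = z.

Definition graded_galgebra (S : comAlgType A) (SG : nat -> S -> Prop)
    (phi : g -> S -> S) : Prop :=
  [/\ forall i, [/\ SG i 0, forall x y, SG i x -> SG i y -> SG i (x + y) &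
                    forall (a : A) x, SG i x -> SG i (a *: x)],
      SG 0%N 1 /\ (forall i j x y, SG i x -> SG j y -> SG (i + j)%N (x * y)),
      direct_sum SG &
      [/\ forall d, kderivation (fun (c : k) (s : S) => (c%:A : A) *: s) (phi d),
          gmodule (fun (a : A) (s : S) => a *: s) phi &
          forall d i s, SG i s -> SG i (phi d s)]].

Definition graded_Sg_module (S : comAlgType A) (SG : nat -> S -> Prop)
    (phi : g -> S -> S) (M : lmodType S) (MG : int -> M -> Prop)
    (f : g -> M -> M) : Prop :=
  [/\ forall i, MG i 0 /\ (forall x y, MG i x -> MG i y -> MG i (x + y)),
      forall i j s m, SG i s -> MG j m -> MG (i%:Z + j) (s *: m),
      direct_sum MG,
      gmodule (fun (a : A) (m : M) => (a%:A : S) *: m) f &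
      (forall d i m, MG i m -> MG i (f d m)) /\
      (forall d (s : S) (m : M), f d (s *: m) = phi d s *: m + s *: f d m)].

End LieAlgebroid.

From HB Require Import structures.
From mathcomp Require Import all_boot all_order all_algebra.
Set Implicit Arguments. Unset Strict Implicit. Unset Printing Implicit Defensive.
Import GRing.Theory.
Local Open Scope ring_scope.

(* If S is a sum of simple g-submodules N_i, an invariant y = sum_j c_j x_j
   with invariant x_j can be rewritten with invariant coefficients: split the
   c_j into simple components and treat one component c in N_i at a time.
   The n in N_i with n x in sum_k N_{i_k} x_k, taken over the remaining
   terms, form a g-submodule of N_i; so either c x is absorbed by the
   remaining terms, or that submodule is zero and then contains phi_d c,
   which therefore vanishes.
   As S is noetherian and the module is finite over S, every set J of
   invariants spans the same S-submodule as finitely many of its elements;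
   these then span J over the invariants of S.  Applied to the ideals of the
   invariant subring (inside S) and to the invariants of M this gives (1)
   and (2). *)

Section Combinations.
Variables (S : pzRingType) (T : lmodType S) (I : Type) (Q : I -> S -> Prop).

Fixpoint comb (l : seq (I * T)) (v : T) : Prop :=
  if l is (i, x) :: l' then exists c t, [/\ Q i c, comb l' t & v = c *: x + t]
  else v = 0.

Lemma comb_cat l1 l2 a b : comb l1 a -> comb l2 b -> comb (l1 ++ l2) (a + b).
Proof.
elim: l1 a => [|[i x] l1 IH] a /=; first by move=> ->; rewrite add0r.
move=> [c [t [Qc Ht ->]]] Hb.
by exists c, (t + b); split=> //; [exact: IH | rewrite addrA].
Qed.

Lemma comb0 l : (forall i, Q i 0) -> comb l 0.
Proof.
move=> Q0; elim: l => [|[i x] l IH] //=.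
by exists 0, 0; split=> //; rewrite scale0r addr0.
Qed.

Lemma combD l a b : (forall i c c', Q i c -> Q i c' -> Q i (c + c')) ->
  comb l a -> comb l b -> comb l (a + b).
Proof.
move=> QD; elim: l a b => [|[i x] l IH] a b /=; first by move=> -> ->; rewrite addr0.
move=> [c [t [Qc Ht ->]]] [c' [t' [Qc' Ht' ->]]].
exists (c + c'), (t + t'); split; [exact: QD | exact: IH |].
by rewrite scalerDl addrACA.
Qed.

Lemma combZ r l v : (forall i c, Q i c -> Q i (r * c)) -> comb l v -> comb l (r *: v).
Proof.
move=> QZ; elim: l v => [|[i x] l IH] v /=; first by move=> ->; rewrite scaler0.
move=> [c [t [Qc Ht ->]]].
exists (r * c), (r *: t); split; [exact: QZ | exact: IH |].
by rewrite scalerDr scalerA.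
Qed.

End Combinations.

Definition lspan (S : pzRingType) (T : lmodType S) (P : S -> Prop) (L : seq T) :=
  comb (fun _ : unit => P) [seq (tt, x) | x <- L].

Section LinearSpan.
Variables (S : pzRingType) (T : lmodType S) (P : S -> Prop).
Hypothesis P0 : P 0.

Lemma lspan0 (L : seq T) : lspan P L 0.
Proof. exact: comb0. Qed.

Lemma lspan_cat (L1 L2 : seq T) a b :
  lspan P L1 a -> lspan P L2 b -> lspan P (L1 ++ L2) (a + b).
Proof. by rewrite /lspan map_cat; apply: comb_cat. Qed.

Lemma lspan_mem (L : seq T) x c : x \in L -> P c -> lspan P L (c *: x).
Proof.
elim: L => [|y L IH] //=; rewrite inE => /predU1P[-> | xL] Pc.
  by exists c, 0; split=> //; [exact: lspan0 | rewrite addr0].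
by exists 0, (c *: x); split=> //; [exact: IH | rewrite scale0r add0r].
Qed.

Lemma lspan_ord (L : seq T) v :
  lspan P L v <-> exists c : 'I_(size L) -> S,
    (forall i, P (c i)) /\ v = \sum_(i < size L) c i *: L`_i.
Proof.
elim: L v => [|x L IH] v /=.
  split=> [->|[c [_ ->]]]; last by rewrite big_ord0.
  by exists (fun _ => 0); split=> //; rewrite big_ord0.
split=> [[c0 [t [Pc0 /IH[c [Pc ->]] ->]]] | [c [Pc ->]]].
  exists (fun i => if unlift ord0 i is Some j then c j else c0); split.
    by move=> i; case: unlift.
  rewrite big_ord_recl unlift_none; congr (_ + _).
  by apply: eq_bigr => i _; rewrite liftK.
rewrite big_ord_recl; exists (c ord0), (\sum_(i < size L) c (lift ord0 i) *: L`_i).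
by split=> //; apply/IH; exists (fun i => c (lift ord0 i)).
Qed.

Lemma fin_genP (N : T -> Prop) :
  fin_gen *:%R P N <->
  exists L, {in L, forall x, N x} /\ forall v, N v -> lspan P L v.
Proof.
split=> [[L [NL HL]] | [L [NL HL]]]; exists L; split.
- move=> x xL; rewrite -(nth_index 0 xL).
  by apply: (NL (Ordinal _)); rewrite index_mem.
- by move=> v /HL Hv; apply/lspan_ord.
- by move=> i; apply: NL; exact: mem_nth.
- by move=> v /HL /lspan_ord.
Qed.

End LinearSpan.

Notation lspanT := (lspan (fun _ => True)).

Definition lsubmodule (S : pzRingType) (T : lmodType S) (P : T -> Prop) :=
  [/\ P 0, forall a b, P a -> P b -> P (a + b) &
      forall (r : S) a, P a -> P (r *: a)].

Section FullSpan.
Variables (S : pzRingType) (T : lmodType S).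

Lemma lspan_lsubmodule (L : seq T) : lsubmodule (lspanT L).
Proof. by split=> [|a b|r a]; [exact: lspan0 | exact: combD | exact: combZ]. Qed.

Lemma lspan_min (P : T -> Prop) (L : seq T) v :
  lsubmodule P -> {in L, forall x, P x} -> lspanT L v -> P v.
Proof.
case=> P0 PD PZ; elim: L v => [|x L IH] v PL /=; first by move=> ->.
move=> [c [t [_ Ht ->]]]; apply: PD; first by apply/PZ/PL; rewrite inE eqxx.
by apply: IH Ht => y yL; apply: PL; rewrite inE yL orbT.
Qed.

Lemma lspan_trans (L L' : seq T) v :
  lspanT L v -> {in L, forall x, lspanT L' x} -> lspanT L' v.
Proof. by move=> Hv HL; apply: lspan_min Hv; [exact: lspan_lsubmodule | exact: HL]. Qed.

Lemma lspan_memT (L : seq T) x : x \in L -> lspanT L x.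
Proof. by move=> xL; rewrite -[x]scale1r; exact: lspan_mem. Qed.

End FullSpan.

Lemma seq_choice (X Y : eqType) (R : X -> Y -> Prop) (xs : seq X) :
  {in xs, forall x, exists y, R x y} ->
  exists W : seq (X * Y), map fst W = xs /\ {in W, forall w, R w.1 w.2}.
Proof.
elim: xs => [|x xs IH] Hxs; first by exists [::].
have [y Rxy] := Hxs x (mem_head _ _).
have [W [<- HW]] := IH (fun z zxs => Hxs z (mem_behead (s := x :: xs) zxs)).
by exists ((x, y) :: W); split=> // w; rewrite inE => /predU1P[-> | /HW].
Qed.

Section Noetherian.
Variables (S : comPzRingType) (T : lmodType S).
Hypothesis S_noeth : noetherian_sub (fun _ : S => True).

Lemma noetherian_ideal (J : S -> Prop) : ideal_of (fun _ => True) J ->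
  exists L : seq S^o, {in L, forall s, J s} /\ forall s, J s -> lspanT L s.
Proof. by move/S_noeth/(fin_genP (T := S^o) I); apply. Qed.

Lemma lspan_lead (x : T) (W : seq (S * T)) (s : S^o) :
  lspanT ([seq w.1 | w <- W] : seq S^o) s ->
  exists ts, lspanT [seq w.2 | w <- W] ts /\
             lspanT [seq w.1 *: x + w.2 | w <- W] (s *: x + ts).
Proof.
elim: W s => [|w W IH] s /=.
  by move=> ->; exists 0; split=> //; rewrite scale0r addr0.
move=> [c [s' [_ /IH[ts' [Hts' Hs']] ->]]].
exists (c *: w.2 + ts'); split; first by exists c, ts'.
exists c, (s' *: x + ts'); split=> //.
by rewrite scalerDl [_ *: (w.1 *: _ + _)]scalerDr scalerA addrACA.
Qed.

Lemma noetherian_submodule (G : seq T) (P : T -> Prop) :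
  lsubmodule P -> (forall t, P t -> lspanT G t) ->
  exists L, {in L, forall x, P x} /\ forall t, P t -> lspanT L t.
Proof.
elim: G P => [|x G IH] P HP PG; first by exists [::]; split=> // t /PG.
have [P0 PD PZ] := HP.
(* Lifting generators of the ideal of leading x-coefficients of P into P
   reduces P to its intersection with span G, handled by induction. *)
pose lead s := exists t, P (s *: x + t) /\ lspanT G t.
have lead_ideal : ideal_of (fun _ => True) lead.
  split=> // [|a b [t [Pa Ga]] [t' [Pb Gb]] | r a _ [t [Pa Ga]]].
  - by exists 0; split; [rewrite scale0r addr0 | exact: lspan0].
  - exists (t + t'); split; [by rewrite scalerDl addrACA; apply: PD | exact: combD].
  - exists (r *: t); split; [by rewrite -scalerA -scalerDr; apply: PZ | exact: combZ].
have [gs [gs_lead lead_gs]] := noetherian_ideal lead_ideal.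
have [W [defgs HW]] := seq_choice gs_lead.
pose ps := [seq w.1 *: x + w.2 | w <- W].
have ps_P : {in ps, forall p, P p} by move=> _ /mapP[w /HW[Pw _] ->].
have [L [LP PL]] : exists L, {in L, forall y, P y /\ lspanT G y} /\
    forall t, P t /\ lspanT G t -> lspanT L t.
  apply: IH => [|t []//]; split=> [|a b [Pa Ga] [Pb Gb] | r a [Pa Ga]].
  - by split; [exact: P0 | exact: lspan0].
  - by split; [exact: PD | exact: combD].
  - by split; [exact: PZ | exact: combZ].
exists (ps ++ L); split=> [y | u Pu].
  by rewrite mem_cat => /orP[/ps_P | /LP[]].
have [s [t [_ Gt defu]]] := PG u Pu.
have /lead_gs : lead s by exists t; rewrite -defu.
rewrite -defgs => /(lspan_lead x)[ts [Wts Hps]].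
have Gts : lspanT G ts by apply: lspan_trans Wts _ => _ /mapP[w /HW[_ Gw] ->].
have Pps : P (s *: x + ts) by exact: lspan_min Hps.
rewrite -[u](subrK (s *: x + ts)) addrC; apply: lspan_cat => //; apply: PL; split.
  by rewrite -scaleN1r; apply/PD/PZ.
rewrite defu opprD addrACA subrr add0r -scaleN1r.
by apply: combD => //; exact: combZ.
Qed.

Lemma noetherian_lspan_subset (G : seq T) (J : T -> Prop) :
  (forall t, J t -> lspanT G t) ->
  exists L, {in L, forall x, J x} /\ forall t, J t -> lspanT L t.
Proof.
move=> JG; pose P t := exists L, {in L, forall x, J x} /\ lspanT L t.
have P_sub : lsubmodule P.
  split=> [|a b [La [JLa Ha]] [Lb [JLb Hb]] | r a [L [JL Ha]]].
  - by exists [::].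
  - exists (La ++ Lb); split; last exact: lspan_cat.
    by move=> y; rewrite mem_cat => /orP[/JLa | /JLb].
  - by exists L; split=> //; exact: combZ.
have [gs [gsP Pgs]] :
    exists gs, {in gs, forall x, P x} /\ forall t, P t -> lspanT gs t.
  apply: (noetherian_submodule (G := G) P_sub) => t [L [JL Ht]].
  by apply: lspan_trans Ht _ => y /JL /JG.
have [W [defgs HW]] := seq_choice gsP.
exists (flatten [seq w.2 | w <- W]); split.
  by move=> y /flatten_mapP[w /HW[JL _]]; exact: JL.
move=> t Jt; apply: lspan_trans (Pgs t _) _.
  exists [:: t]; split; last exact: lspan_memT (mem_head _ _).
  by move=> y; rewrite inE => /eqP ->.
rewrite -defgs => _ /mapP[w wW ->]; apply: lspan_trans (HW w wW).2 _ => y yw.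
by apply: lspan_memT; apply/flatten_mapP; exists w.
Qed.
End Noetherian.

Lemma morph_add0 (U V : zmodType) (h : U -> V) :
  {morph h : x y / x + y} -> h 0 = 0.
Proof. by move=> hD; apply: (@addrI _ (h 0)); rewrite -hD !addr0. Qed.

Section InvariantLifting.
Variables (k : comPzRingType) (A : comAlgType k) (g : lmodType A).
Variables (S : lalgType A) (phi : g -> S -> S) (T : lmodType S) (F : g -> T -> T).
Hypothesis phiD : forall d, {morph phi d : x y / x + y}.
Hypothesis FD : forall d, {morph F d : x y / x + y}.
Hypothesis F_Leibniz : forall d (c : S) x, F d (c *: x) = phi d c *: x + c *: F d x.

Local Notation scA := (fun (a : A) (s : S) => a *: s).
Local Notation barS := (invariants 0 phi).
Local Notation barT := (invariants 0 F).

Lemma invariants0 : barS 0.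
Proof. by move=> d; exact: morph_add0. Qed.

Lemma invariantsD x y : barS x -> barS y -> barS (x + y).
Proof. by move=> Hx Hy d; rewrite phiD Hx Hy addr0. Qed.

Variables (I : Type) (N : I -> S -> Prop).
Hypothesis N_simple : forall i, simple_gsubmodule scA phi (N i).

Lemma comb_scale (a : A) (l : seq (I * T)) v :
  comb N l v -> comb N l ((a%:A : S) *: v).
Proof.
apply: combZ => i c Nc; rewrite mulr_algl.
by have [[_ _ NZ _] _ _] := N_simple i; exact: NZ.
Qed.

Lemma combN (l : seq (I * T)) v : comb N l v -> comb N l (- v).
Proof. by move/(comb_scale (-1)); rewrite scaleN1r scaleN1r. Qed.

Lemma comb0_simple (l : seq (I * T)) : comb N l 0.
Proof. by apply: comb0 => i; have [[]] := N_simple i. Qed.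

Lemma combD_simple (l : seq (I * T)) a b :
  comb N l a -> comb N l b -> comb N l (a + b).
Proof. by apply: combD => i; have [[_ ND _ _] _ _] := N_simple i. Qed.

Lemma comb_action d (l : seq (I * T)) v :
  {in [seq p.2 | p <- l], forall x, barT x} -> comb N l v -> comb N l (F d v).
Proof.
elim: l v => [|[i x] l IH] v lbar /=; first by move=> ->; exact: morph_add0.
move=> [c [t [Nc Ht ->]]]; exists (phi d c), (F d t); split.
- by have [[_ _ _ NF] _ _] := N_simple i; exact: NF.
- by apply: IH Ht => y yl; apply: lbar; rewrite inE yl orbT.
- by rewrite FD F_Leibniz (lbar x (mem_head _ _)) scaler0 addr0.
Qed.

Lemma comb_invariant_lspan (L : seq T) (l : seq (I * T)) y :
  {in L, forall x, barT x} -> {subset [seq p.2 | p <- l] <= L} ->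
  comb N l y -> barT y -> lspan barS L y.
Proof.
move=> Lbar; elim: l y => [|[i x] l IH] y lL /=.
  by move=> -> _; apply: lspan0; exact: invariants0.
have xL : x \in L by apply: lL; exact: mem_head.
have lL' : {subset [seq p.2 | p <- l] <= L}.
  by move=> z zl; apply: lL; rewrite inE zl orbT.
have lbar : {in [seq p.2 | p <- l], forall z, barT z} by move=> z /lL' /Lbar.
move=> [c [t [Nc Ht ->]]] ybar.
have Fx d n : F d (n *: x) = phi d n *: x.
  by rewrite F_Leibniz (Lbar x xL) scaler0 addr0.
have [[N0 ND NZ NF] _ Nmin] := N_simple i.
pose Qs n := N i n /\ comb N l (n *: x).
have Qs_sub : gsubmodule scA phi Qs.
  split=> [|a b [Na Ha] [Nb Hb] | a n [Nn Hn] | d n [Nn Hn]].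
  - by split=> //; rewrite scale0r; exact: comb0_simple.
  - by split; [exact: ND | rewrite scalerDl; exact: combD_simple].
  - by split; [exact: NZ | rewrite -mulr_algl -scalerA; exact: comb_scale].
  - by split; [exact: NF | rewrite -Fx; exact: comb_action].
have [Qs0 | NQs] := Nmin Qs Qs_sub (fun n => @proj1 _ _); last first.
  by apply: IH lL' _ ybar; apply: combD_simple (NQs c Nc).2 Ht.
have cbar : barS c.
  move=> d; apply: Qs0; split; first exact: NF.
  have /eqP := ybar d; rewrite FD Fx addr_eq0 => /eqP ->.
  exact/combN/comb_action.
have tbar : barT t by move=> d; have := ybar d; rewrite FD Fx cbar scale0r add0r.
apply: combD => [_ ? ? ? ? | |]; first exact: invariantsD.
  by apply: lspan_mem => //; exact: invariants0.
exact: IH lL' Ht tbar.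
Qed.

Hypothesis N_span : forall c : S,
  exists (s : seq I) (cs : I -> S),
    (forall i, N i (cs i)) /\ c = \sum_(i <- s) cs i.

Lemma lspan_comb (L : seq T) v :
  lspanT L v -> exists l, {subset [seq p.2 | p <- l] <= L} /\ comb N l v.
Proof.
elim: L v => [|x L IH] v /=; first by move=> ->; exists [::].
move=> [c [t [_ /IH[l [lL Hl]] ->]]].
have [s [cs [Ncs ->]]] := N_span c.
exists ([seq (i, x) | i <- s] ++ l); split.
  have -> : [seq p.2 | p <- [seq (i, x) | i <- s] ++ l] =
            nseq (size s) x ++ [seq p.2 | p <- l].
    by rewrite map_cat; elim: (s) => //= ? ? ->.
  move=> y; rewrite mem_cat mem_nseq => /orP[/andP[_ /eqP ->] | /lL yL].
    exact: mem_head.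
  by rewrite inE yL orbT.
apply: comb_cat => //; rewrite scaler_suml.
elim: s => [|i s IHs] /=; first by rewrite big_nil.
by exists (cs i), (\sum_(j <- s) cs j *: x); split=> //; rewrite big_cons.
Qed.

Lemma lspan_invariant (L : seq T) y :
  {in L, forall x, barT x} -> lspanT L y -> barT y -> lspan barS L y.
Proof.
by move=> Lbar /lspan_comb[l [lL Hl]]; exact: comb_invariant_lspan Lbar lL Hl.
Qed.

End InvariantLifting.

Section Derivations.
Variables (k : comPzRingType) (A : comAlgType k) (g : lmodType A).

Lemma invariants_subring (R : pzRingType) (D : g -> R -> R) :
  (forall d, {morph D d : x y / x + y}) ->
  (forall d x y, D d (x * y) = D d x * y + x * D d y) ->
  subring_pred (invariants 0 D).
Proof.
move=> DD DM; have D0 d : D d 0 = 0 by exact: morph_add0.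
have DN d x : D d (- x) = - D d x.
  by apply/eqP; rewrite -addr_eq0 -DD addNr D0.
split=> [d | x y xbar ybar].
  have := DM d 1 1; rewrite !mulr1 mul1r => D1.
  by apply: (@addrI _ (D d 1)); rewrite addr0 -D1.
split=> d; last by rewrite DM xbar ybar mul0r mulr0 addr0.
by rewrite DD DN xbar ybar oppr0 addr0.
Qed.

Lemma invariants_graded (I : eqType) (V : zmodType) (G : I -> V -> Prop)
    (D : g -> V -> V) :
  (forall d, {morph D d : x y / x + y}) -> (forall i, G i 0) -> direct_sum G ->
  (forall d i x, G i x -> G i (D d x)) -> graded_sub G (invariants 0 D).
Proof.
move=> DD G0 [Gdec Gindep] DG v vbar; have [s [c [us Gc defv]]] := Gdec v.
exists s, (fun i => if i \in s then c i else 0); split=> //; last first.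
  by rewrite defv; apply: eq_big_seq => i ->.
move=> i; case: ifP => [i_s | _].
  split=> // d; apply: (Gindep s (fun j => D d (c j))) => // [j _ | ].
    exact: DG.
  by rewrite -(big_morph _ (DD d) (morph_add0 (DD d))) -defv; exact: vbar.
by split=> [d|]; [exact: morph_add0 | exact: G0].
Qed.

End Derivations.

Section Invariants.
Variables (k : comPzRingType) (A : comAlgType k) (g : lmodType A).
Variables (S : comAlgType A) (phi : g -> S -> S) (T : lmodType S) (F : g -> T -> T).
Hypothesis phiD : forall d, {morph phi d : x y / x + y}.
Hypothesis FD : forall d, {morph F d : x y / x + y}.
Hypothesis F_Leibniz : forall d (c : S) x, F d (c *: x) = phi d c *: x + c *: F d x.
Hypothesis S_semisimple : semisimple_gmodule (fun (a : A) (s : S) => a *: s) phi.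
Hypothesis S_noeth : noetherian_sub (fun _ : S => True).
Hypothesis T_fin : fin_gen *:%R (fun _ : S => True) (fun _ : T => True).

Theorem invariants_fin_gen (J : T -> Prop) :
  (forall x, J x -> invariants 0 F x) -> fin_gen *:%R (invariants 0 phi) J.
Proof.
move=> Jbar; have [Ix [N [N_simple [N_dec _]]]] := S_semisimple.
have N_span c : exists (s : seq Ix) (cs : Ix -> S),
    (forall i, N i (cs i)) /\ c = \sum_(i <- s) cs i.
  by have [s [cs [_ ? ?]]] := N_dec c; exists s, cs.
have [G [_ TG]] := (fin_genP I _).1 T_fin.
have [L [JL LJ]] := noetherian_lspan_subset (J := J) S_noeth (fun t _ => TG t I).
apply/(fin_genP (invariants0 phiD)); exists L; split=> // y Jy.
apply: (lspan_invariant phiD FD F_Leibniz N_simple N_span) (LJ y Jy) (Jbar y Jy).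
by move=> x /JL /Jbar.
Qed.

End Invariants.

Theorem mainTheorem1
  (k : comPzRingType) (A : comAlgType k)
  (g : lmodType A) (br : g -> g -> g) (alpha : g -> A -> A)
  (Hg : lie_algebroid br alpha)
  (S : comAlgType A) (SG : nat -> S -> Prop) (phi : g -> S -> S)
  (HS : graded_galgebra br alpha SG phi)
  (HSnoeth : noetherian_sub (fun _ : S => True))
  (M : lmodType S) (MG : int -> M -> Prop) (f : g -> M -> M)
  (HM : graded_Sg_module br alpha SG phi MG f)
  (HMfin : fin_gen *:%R (fun _ : S => True) (fun _ : M => True)) :
  let barS := invariants 0 phi in
  let barM := invariants 0 f in
  (* (1) *)
  (semisimple_gmodule (fun (a : A) (s : S) => a *: s) phi ->
   noetherian_sub (fun s => barS s /\ SG 0%N s) ->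
   [/\ subring_pred barS, graded_sub SG barS & noetherian_sub barS]) /\
  (* (2) *)
  (semisimple_gmodule (fun (a : A) (s : S) => a *: s) phi ->
   noetherian_sub (fun s => barS s /\ SG 0%N s) ->
   semisimple_gmodule (fun (a : A) (m : M) => (a%:A : S) *: m) f ->
   fin_gen *:%R barS barM).
Proof.
move=> barS barM.
have [SG_sub _ SG_dsum [phi_der _ phi_SG]] := HS.
have phiD d : {morph phi d : x y / x + y} by case: (phi_der d).
have phiM d x y : phi d (x * y) = phi d x * y + x * phi d y by case: (phi_der d).
have [_ _ _ [[fD _] _ _ _ _] [_ f_Leibniz]] := HM.
have S_fin : fin_gen *:%R (fun _ : S => True) (fun _ : S^o => True).
  apply/(fin_genP I); exists [:: 1]; split=> // v _; exists v, 0; rewrite addr0.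
  by split=> //; exact: (esym (mulr1 v)).
split=> [S_semi _ | S_semi _ _]; last first.
  by apply: (invariants_fin_gen phiD fD f_Leibniz S_semi HSnoeth HMfin).
split; first exact: invariants_subring phiD phiM.
  by apply: invariants_graded => // i; have [] := SG_sub i.
move=> J [JbarS _ _ _].
exact: (invariants_fin_gen (T := S^o) phiD phiD phiM S_semi HSnoeth S_fin).
Qed.
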